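(* Let $A$ be an infinite alphabet and let $M\in\mathbb{N}$ with $M\geq 1$. Let $\tilde f:A^{M+2}\to\{0,1\}$ be a map satisfying: (1) there exist $x_1,\dots,x_M\in A$ such that there are infinitely many $x_{M+1}\in A$ for which $$1=\tilde f(x_1,x_2,\dots,x_M,x_{M+1},x_1)=\tilde f(x_2,x_3,\dots,x_{M+1},x_1,x_2)=\cdots=\tilde f(x_M,x_{M+1},x_1,\dots,x_M)=\tilde f(x_{M+1},x_1,x_2,\dots,x_{M+1}),$$ i.e. $\tilde f$ takes the value $1$ on each of the $M+1$ words of length $M+2$ obtained by reading $M+2$ consecutive letters of the periodic sequence $x_1x_2\cdots x_Mx_{M+1}x_1x_2\cdots$ starting at positions $1,2,\dots,M+1$; (2) for each $(x_1,\dots,x_{M+1})\in A^{M+1}$ there are only finitely many $x_{M+2}\in A$ with $\tilde f(x_1,\dots,x_{M+1},x_{M+2})=1$. Let $f$ be the $(M+1)$-step shift map induced by $\tilde f$ and $X_f$ the associated $(M+1)$-step shift space. Then $X_f$ is not conjugate to any $M$-step shift space (over any alphabet $B$).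
   Context: Following Ott–Tomforde–Willis. For an alphabet $A$, let $\emptyset$ denote the empty sequence, $\Sigma_A^{fin}=\{\emptyset\}\cup\bigcup_{k\ge1}A^k$, $\Sigma_A^{inf}=A^{\mathbb N}$. The full shift is $\Sigma_A=\Sigma_A^{inf}$ if $A$ is finite and $\Sigma_A=\Sigma_A^{inf}\cup\Sigma_A^{fin}$ if $A$ is infinite. The length $l(x)$ is $k$ if $x\in A^k$ (with $l(\emptyset)=0$) and $\infty$ if $x\in\Sigma_A^{inf}$. The topology on $\Sigma_A$ has as basis the generalized cylinders $Z(x,F)=\{y\in\Sigma_A: y_i=x_i\ (1\le i\le k),\ y_{k+1}\notin F\}$ for $x=(x_1,\dots,x_k)\neq\emptyset$ and finite $F\subseteq A$, and $Z(\emptyset,F)=\{y\in\Sigma_A: y_1\notin F\}$ (the condition $y_{k+1}\notin F$ is vacuous when $F=\emptyset$; when $F\ne\emptyset$ it requires $l(y)\ge k+1$ or... precisely, $y$ of length $k$ belongs to $Z(x,F)$ as $y_{k+1}$ does not exist). The shift map $\sigma$ deletes the first letter (and sends $\emptyset$ and length-one words to $\emptyset$). A subblock of $x\in\Sigma_A$ is $u\in\Sigma_A^{fin}$ with $x=vuz$ for some $v\in\Sigma_A^{fin}$, $z\in\Sigma_A$. For $f:\bigcup_{k\ge1}A^k\to\{0,1\}$, let $X_f^{inf}=\{x\in\Sigma_A^{inf}: f(u)=1$ for every nonempty subblock $u$ of $x\}$, $X_f^{fin}=\{x\in\Sigma_A^{fin}:$ there are infinitely many $a\in A$ for which some $y\in\Sigma_A^{inf}$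 has $xay\in X_f^{inf}\}$, and $X_f=X_f^{inf}\cup X_f^{fin}$. Given $N\ge0$ and $\tilde f:A^{N+1}\to\{0,1\}$, the $N$-step shift map induced by $\tilde f$ is $f(x)=1$ if $|x|\le N$ and $f(x)=\prod_{i=1}^{|x|-N}\tilde f(x_i,\dots,x_{N+i})$ if $|x|\ge N+1$. A subset of $\Sigma_A$ is an $N$-step shift space iff it equals $X_f$ for some $N$-step shift map $f$ induced by some $\tilde f:A^{N+1}\to\{0,1\}$ (equivalently, it is the shift space defined by a set of forbidden words all of length $N+1$). A conjugacy between shift spaces $\Lambda\subseteq\Sigma_A$ and $Y\subseteq\Sigma_B$ is a bijection $\phi:\Lambda\to Y$ that is continuous, commutes with the shift maps, and satisfies $l(\phi(x))=l(x)$ for all $x\in\Lambda$. *)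

From Stdlib Require Import List Arith Bool.
Import ListNotations.
Set Implicit Arguments.

Definition infinite_type (A : Type) : Prop := ~ exists l : list A, forall a : A, In a l.

Definition infinitely_many (A : Type) (P : A -> Prop) : Prop :=
  ~ exists l : list A, forall a, P a -> In a l.

Definition finitely_many (A : Type) (P : A -> Prop) : Prop :=
  exists l : list A, forall a, P a -> In a l.

(* Points: finite words (incl. the empty sequence) or infinite sequences.
   Letters are indexed from 0 (the paper indexes from 1). *)
Inductive pt (A : Type) : Type :=
| Fin : list A -> pt A
| Inf : (nat -> A) -> pt A.
Arguments Fin {A}. Arguments Inf {A}.

(* membership in the full shift Sigma_A: finite words only when A is infinite *)
Definition inSigma (A : Type) (p : pt A) : Prop :=
  match p with Fin _ => infinite_type A | Inf _ => True end.

(* length: Some k for a word of length k, None for infinity *)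
Definition len (A : Type) (p : pt A) : option nat :=
  match p with Fin w => Some (length w) | Inf _ => None end.

Definition get (A : Type) (p : pt A) (i : nat) : option A :=
  match p with Fin w => nth_error w i | Inf x => Some (x i) end.

Definition shift (A : Type) (p : pt A) : pt A :=
  match p with
  | Fin w => Fin (tl w)
  | Inf x => Inf (fun n => x (S n))
  end.

(* generalized cylinder Z(x,F) in Sigma_A, F a finite subset given by a list *)
Definition cyl (A : Type) (x : list A) (F : list A) (y : pt A) : Prop :=
  inSigma y /\
  (forall i a, nth_error x i = Some a -> get y i = Some a) /\
  (forall a, get y (length x) = Some a -> ~ In a F).

(* open subsets of Sigma_A: unions of generalized cylinders *)
Definition is_open (A : Type) (U : pt A -> Prop) : Prop :=
  forall y, U y -> exists x F, cyl x F y /\ forall z, cyl x F z -> U z.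

(* continuity of phi restricted to Lam (subspace topologies) *)
Definition continuous_on (A B : Type) (Lam : pt A -> Prop) (phi : pt A -> pt B) : Prop :=
  forall V : pt B -> Prop, is_open V ->
    exists U : pt A -> Prop, is_open U /\ forall x, Lam x -> (U x <-> V (phi x)).

Definition conjugate (A : Type) (Lam : pt A -> Prop) (B : Type) (Y : pt B -> Prop) : Prop :=
  exists phi : pt A -> pt B,
    (forall x, Lam x -> Y (phi x)) /\
    (forall x y, Lam x -> Lam y -> phi x = phi y -> x = y) /\
    (forall y, Y y -> exists x, Lam x /\ phi x = y) /\
    continuous_on Lam phi /\
    (forall x, Lam x -> phi (shift x) = shift (phi x)) /\
    (forall x, Lam x -> len (phi x) = len x).

Definition block (A : Type) (x : nat -> A) (i k : nat) : list A :=
  map (fun j => x (i + j)) (seq 0 k).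

Definition cons_seq (A : Type) (a : A) (y : nat -> A) : nat -> A :=
  fun n => match n with 0 => a | S m => y m end.
Definition app_seq (A : Type) (l : list A) (y : nat -> A) : nat -> A :=
  fold_right (@cons_seq A) y l.

(* X_f^inf, X_f^fin, X_f for f : (nonempty words) -> {0,1} *)
Definition Xinf (A : Type) (f : list A -> bool) (x : nat -> A) : Prop :=
  forall i k, 1 <= k -> f (block x i k) = true.
Definition Xfin (A : Type) (f : list A -> bool) (w : list A) : Prop :=
  infinitely_many (fun a : A => exists y : nat -> A, Xinf f (app_seq (w ++ [a]) y)).
Definition Xf (A : Type) (f : list A -> bool) (p : pt A) : Prop :=
  match p with Fin w => Xfin f w | Inf x => Xinf f x end.

(* N-step shift map induced by ft : A^{N+1} -> {0,1}
   (ft is given on all lists; only its values on words of length N+1 are used) *)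
Definition f_ind (A : Type) (N : nat) (ft : list A -> bool) (w : list A) : bool :=
  if length w <=? N then true
  else forallb (fun i => ft (firstn (S N) (skipn i w))) (seq 0 (length w - N)).

Definition is_Nstep_shift (B : Type) (N : nat) (Y : pt B -> Prop) : Prop :=
  exists ft : list B -> bool, forall p, Y p <-> Xf (f_ind N ft) p.

(* The word [xs] is a finite point of [X_f]: each of the infinitely many good letters [a]
   continues it by the periodic point [(xs a)^oo].  A conjugacy [phi] sends [xs] to a word [u]
   of length [M], and by continuity it sends [(xs a)^oo], for a suitable good [a], to a point
   beginning with [u].  That periodic point is the shift of a point [q] of [X_f], so [phi q]
   begins with [z0 u] for some letter [z0].  Since [Y] is [M]-step, every continuation of [u]
   also continues [z0 u], so [z0 u] is a finite point of [Y] of length [M + 1].  Its preimage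
   is a finite point of [X_f] of length [M + 1], which condition (2) forbids for the
   [(M + 1)]-step shift [X_f]. *)

From Pilot Require Import Defs.
From Stdlib Require Import List Arith Bool Lia Classical FunctionalExtensionality.
Import ListNotations.
Set Implicit Arguments.

Lemma block_S (A : Type) (x : nat -> A) (i k : nat) :
  block x i (S k) = x i :: block x (S i) k.
Proof.
  unfold block; simpl; rewrite Nat.add_0_r; f_equal.
  rewrite <- seq_shift, map_map; apply map_ext; intros j; f_equal; lia.
Qed.

Lemma block_length (A : Type) (x : nat -> A) (i k : nat) : length (block x i k) = k.
Proof. unfold block; rewrite length_map, length_seq; reflexivity. Qed.

Lemma block_ext (A : Type) (x y : nat -> A) (i j k : nat) :
  (forall n, n < k -> x (i + n) = y (j + n)) -> block x i k = block y j k.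
Proof.
  intros Hxy; unfold block; apply map_ext_in; intros n Hn.
  apply in_seq in Hn; apply Hxy; lia.
Qed.

Lemma block_skipn (A : Type) (x : nat -> A) (j : nat) :
  forall i k, skipn j (block x i k) = block x (i + j) (k - j).
Proof.
  induction j as [|j IH]; intros i k.
  - rewrite Nat.add_0_r, Nat.sub_0_r; reflexivity.
  - destruct k as [|k]; [reflexivity|].
    rewrite block_S; simpl skipn; rewrite IH; f_equal; lia.
Qed.

Lemma block_firstn (A : Type) (x : nat -> A) (n : nat) :
  forall i k, n <= k -> firstn n (block x i k) = block x i n.
Proof.
  induction n as [|n IH]; intros i k Hnk; [reflexivity|].
  destruct k as [|k]; [lia|].
  rewrite !block_S; simpl; f_equal; apply IH; lia.
Qed.

Lemma block_of_prefix (A : Type) (x : nat -> A) (u : list A) :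
  forall i, (forall j c, nth_error u j = Some c -> x (i + j) = c) ->
  block x i (length u) = u.
Proof.
  induction u as [|c u IH]; intros i Hu; [reflexivity|].
  simpl length; rewrite block_S; f_equal.
  - rewrite <- (Hu 0 c eq_refl); f_equal; lia.
  - apply IH; intros j c' Hj; rewrite <- (Hu (S j) c' Hj); f_equal; lia.
Qed.

Lemma block_firstn_skipn (A : Type) (x : nat -> A) (l : list A) (d : A) (k n : nat) :
  k + n <= length l -> (forall j, j < n -> x (k + j) = nth (k + j) l d) ->
  block x k n = firstn n (skipn k l).
Proof.
  intros Hkn Hx.
  assert (Hlen : length (firstn n (skipn k l)) = n).
  { rewrite length_firstn, length_skipn; lia. }
  rewrite <- Hlen at 1; apply block_of_prefix; intros j c Hj.
  rewrite nth_error_firstn in Hj; destruct (Nat.ltb_spec j n) as [Hjn|]; [|discriminate].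
  rewrite nth_error_skipn in Hj; rewrite Hx by exact Hjn; exact (nth_error_nth _ _ _ Hj).
Qed.

Lemma app_seq_nth (A : Type) (l : list A) (s : nat -> A) :
  forall n, app_seq l s n = nth n l (s (n - length l)).
Proof.
  induction l as [|a l IH]; intros n.
  - rewrite Nat.sub_0_r; destruct n; reflexivity.
  - destruct n; [reflexivity|]; apply IH.
Qed.

Lemma block_app_seq (A : Type) (w1 w2 : list A) (s : nat -> A) :
  block (app_seq (w1 ++ w2) s) 0 (length w1) = w1.
Proof.
  apply block_of_prefix; intros j c Hj; simpl Nat.add.
  rewrite app_seq_nth; apply nth_error_nth; rewrite nth_error_app1; [exact Hj|].
  apply nth_error_Some; rewrite Hj; discriminate.
Qed.

Definition periodic (A : Type) (w : list A) (d : A) (n : nat) : A :=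
  nth (n mod length w) w d.

Lemma periodic_add_length (A : Type) (w : list A) (d : A) (n : nat) :
  periodic w d (n + length w) = periodic w d n.
Proof. unfold periodic; rewrite <- (Nat.mul_1_l (length w)) at 1; now rewrite Nat.Div0.mod_add. Qed.

Lemma periodic_nth (A : Type) (w : list A) (d : A) (n : nat) :
  n < length w + length w -> periodic w d n = nth n (w ++ w) d.
Proof.
  intros Hn; unfold periodic.
  destruct (Nat.lt_ge_cases n (length w)) as [Hs|Hb].
  - rewrite Nat.mod_small, app_nth1 by exact Hs; reflexivity.
  - rewrite app_nth2 by exact Hb; f_equal.
    replace n with ((n - length w) + 1 * length w) at 1 by lia.
    rewrite Nat.Div0.mod_add; apply Nat.mod_small; lia.
Qed.

Lemma app_seq_periodic (A : Type) (w : list A) (d : A) (n : nat) :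
  app_seq w (periodic w d) n = periodic w d n.
Proof.
  rewrite app_seq_nth; destruct (Nat.lt_ge_cases n (length w)) as [Hs|Hb].
  - rewrite (@periodic_nth _ w d n), app_nth1 by lia; apply nth_indep; exact Hs.
  - rewrite nth_overflow by exact Hb.
    rewrite <- periodic_add_length; f_equal; lia.
Qed.

Lemma shift_periodic_last (A : Type) (w : list A) (d : A) (k : nat) :
  length w = S k -> shift (Inf (fun n => periodic w d (k + n))) = Inf (periodic w d).
Proof.
  intros Hw; simpl; f_equal; apply functional_extensionality; intros n.
  rewrite <- (@periodic_add_length _ w d n), Hw; f_equal; lia.
Qed.

Lemma f_ind_full_window (A : Type) (N : nat) (g : list A -> bool) (w : list A) :
  length w = S N -> f_ind N g w = g w.
Proof.
  intros Hw; unfold f_ind; rewrite Hw.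
  replace (S N <=? N) with false by (symmetry; apply Nat.leb_gt; lia).
  replace (S N - N) with 1 by lia; cbn [seq forallb skipn].
  now rewrite firstn_all2, andb_true_r by lia.
Qed.

Lemma Xinf_f_ind_iff (A : Type) (N : nat) (g : list A -> bool) (x : nat -> A) :
  Xinf (f_ind N g) x <-> forall i, g (block x i (S N)) = true.
Proof.
  split.
  - intros Hx i; rewrite <- (@f_ind_full_window _ N) by apply block_length; apply Hx; lia.
  - intros Hx i k _; unfold f_ind; rewrite block_length.
    destruct (Nat.leb_spec k N); [reflexivity|].
    apply forallb_forall; intros j Hj; apply in_seq in Hj.
    rewrite block_skipn, block_firstn by lia; apply Hx.
Qed.

Lemma Xinf_shift_by (A : Type) (f : list A -> bool) (x : nat -> A) (k : nat) :
  Xinf f x -> Xinf f (fun n => x (k + n)).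
Proof.
  intros Hx i m Hm; rewrite (@block_ext A _ x i (k + i) m); [apply Hx, Hm|].
  intros n _; f_equal; lia.
Qed.

(* [Defs.] disambiguates from the list lemma [List.cons_seq]. *)
Lemma Xinf_f_ind_cons (A : Type) (N : nat) (g : list A -> bool) (x : nat -> A) (b : A) :
  Xinf (f_ind N g) x -> g (b :: block x 0 N) = true -> Xinf (f_ind N g) (Defs.cons_seq b x).
Proof.
  rewrite !Xinf_f_ind_iff; intros Hx Hb [|i].
  - rewrite block_S; exact Hb.
  - rewrite (@block_ext A _ x _ i); [apply Hx|reflexivity].
Qed.

Lemma periodic_Xinf (A : Type) (N : nat) (g : list A -> bool) (w : list A) (d : A) :
  0 < length w -> N <= length w ->
  (forall k, k < length w -> g (firstn (S N) (skipn k (w ++ w))) = true) ->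
  Xinf (f_ind N g) (periodic w d).
Proof.
  intros Hw HN Hg; apply Xinf_f_ind_iff; intros i.
  set (k := i mod length w).
  assert (Hk : k < length w) by (apply Nat.mod_upper_bound; lia).
  rewrite (@block_ext A _ (periodic w d) i k).
  - rewrite (@block_firstn_skipn A _ (w ++ w) d); [apply Hg, Hk| |].
    + rewrite length_app; lia.
    + intros j Hj; apply periodic_nth; lia.
  - intros n _; unfold periodic, k; now rewrite Nat.Div0.add_mod_idemp_l.
Qed.

Lemma infinitely_many_mono (A : Type) (P Q : A -> Prop) :
  (forall a, P a -> Q a) -> infinitely_many P -> infinitely_many Q.
Proof. intros HPQ HP [l Hl]; apply HP; exists l; intros a Ha; apply Hl, HPQ, Ha. Qed.

Lemma infinitely_many_infinite_type (A : Type) (P : A -> Prop) :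
  infinitely_many P -> infinite_type A.
Proof. intros HP [l Hl]; apply HP; exists l; intros a _; apply Hl. Qed.

Lemma infinitely_many_avoid (A : Type) (P : A -> Prop) (F : list A) :
  infinitely_many P -> exists a, P a /\ ~ In a F.
Proof.
  intros HP; apply NNPP; intros Hno; apply HP; exists F; intros a Ha.
  apply NNPP; intros HaF; apply Hno; exists a; split; assumption.
Qed.

Definition has_prefix (A : Type) (p : pt A) (u : list A) : Prop :=
  forall i a, nth_error u i = Some a -> get p i = Some a.

Lemma block_of_has_prefix (A : Type) (x : nat -> A) (u : list A) :
  has_prefix (Inf x) u -> block x 0 (length u) = u.
Proof.
  intros Hx; apply block_of_prefix; intros j c Hj.
  specialize (Hx j c Hj); simpl in Hx |- *; congruence.
Qed.

Lemma periodic_has_prefix (A : Type) (w : list A) (d : A) :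
  has_prefix (Inf (periodic w d)) w.
Proof.
  intros i c Hi; assert (Hlt : i < length w) by (apply nth_error_Some; rewrite Hi; discriminate).
  simpl; f_equal; rewrite periodic_nth, app_nth1 by lia.
  exact (nth_error_nth _ _ _ Hi).
Qed.

Lemma Xfin_of_periodic (A : Type) (f : list A -> bool) (w : list A) :
  infinitely_many (fun a => Xinf f (periodic (w ++ [a]) a)) -> Xfin f w.
Proof.
  apply infinitely_many_mono; intros a Ha; exists (periodic (w ++ [a]) a).
  replace (app_seq (w ++ [a]) (periodic (w ++ [a]) a)) with (periodic (w ++ [a]) a);
    [exact Ha|].
  symmetry; apply functional_extensionality, app_seq_periodic.
Qed.

Lemma Xfin_f_ind_next (A : Type) (N : nat) (g : list A -> bool) (v : list A) :
  Xfin (f_ind N g) v -> length v = N -> infinitely_many (fun c => g (v ++ [c]) = true).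
Proof.
  intros Hv Hlen; revert Hv; apply infinitely_many_mono; intros c [s Hs].
  apply Xinf_f_ind_iff with (i := 0) in Hs.
  pose proof (block_app_seq (v ++ [c]) [] s) as Hblock.
  rewrite app_nil_r, length_app, Hlen, Nat.add_1_r in Hblock.
  rewrite Hblock in Hs; exact Hs.
Qed.

(* Only the first window of [z 0 :: u ++ [c] ++ s] is new, and it is a window of [z]. *)
Lemma Xfin_f_ind_cons (A : Type) (N : nat) (g : list A -> bool) (u : list A) (z : nat -> A) :
  Xfin (f_ind N g) u -> length u = N -> Xinf (f_ind N g) z ->
  has_prefix (shift (Inf z)) u -> Xfin (f_ind N g) (z 0 :: u).
Proof.
  intros Hu Hlen Hz Hzu.
  assert (Hhead : g (z 0 :: u) = true).
  { rewrite <- (block_of_has_prefix Hzu), Hlen.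
    apply Xinf_f_ind_iff with (i := 0) in Hz; rewrite block_S in Hz; exact Hz. }
  revert Hu; apply infinitely_many_mono; intros c [s Hs].
  exists s; apply (@Xinf_f_ind_cons _ N g (app_seq (u ++ [c]) s) (z 0) Hs).
  rewrite <- Hlen, block_app_seq; exact Hhead.
Qed.

Lemma cyl_Inf_of_Fin (A : Type) (x F w : list A) (a : A) (y : nat -> A) :
  cyl x F (Fin w) -> has_prefix (Inf y) (w ++ [a]) -> ~ In a F -> cyl x F (Inf y).
Proof.
  intros [_ [Hxw HwF]] Hy HaF.
  assert (Hprefix : forall i c, nth_error x i = Some c -> nth_error (w ++ [a]) i = Some c).
  { intros i c Hc; specialize (Hxw i c Hc); simpl in Hxw.
    rewrite nth_error_app1; [exact Hxw|].
    apply nth_error_Some; rewrite Hxw; discriminate. }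
  assert (Hxlen : length x <= length w).
  { destruct (Nat.le_gt_cases (length x) (length w)) as [|Hgt]; [assumption|].
    destruct (nth_error x (length w)) as [c|] eqn:Hc.
    - specialize (Hxw _ _ Hc); simpl in Hxw.
      rewrite (proj2 (nth_error_None w (length w)) (le_n _)) in Hxw; discriminate.
    - apply nth_error_None in Hc; lia. }
  split; [exact I|]; split.
  - intros i c Hc; apply Hy, Hprefix, Hc.
  - intros c Hc; simpl in Hc; injection Hc as <-.
    destruct (Nat.lt_ge_cases (length x) (length w)) as [Hlt|Hge].
    + pose proof (nth_error_nth' w a Hlt) as Hwe.
      assert (Hye : get (Inf y) (length x) = Some (nth (length x) w a))
        by (apply Hy; rewrite nth_error_app1 by exact Hlt; exact Hwe).
      simpl in Hye; injection Hye as ->; apply HwF, Hwe.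
    + replace (length x) with (length w) in * by lia.
      enough (Hwa : y (length w) = a) by (rewrite Hwa; exact HaF).
      specialize (Hy (length w) a); simpl in Hy; injection Hy as Hwa; [exact Hwa|].
      rewrite nth_error_app2, Nat.sub_diag by lia; reflexivity.
Qed.

Lemma is_open_cyl (A : Type) (x F : list A) : is_open (cyl x F).
Proof. intros y Hy; exists x, F; split; [exact Hy | intros z Hz; exact Hz]. Qed.

Lemma continuous_on_Fin_prefix (A B : Type) (Lam : pt A -> Prop) (phi : pt A -> pt B)
    (w : list A) (u : list B) :
  continuous_on Lam phi -> Lam (Fin w) -> infinite_type B -> phi (Fin w) = Fin u ->
  exists x F, cyl x F (Fin w) /\ forall y, Lam y -> cyl x F y -> has_prefix (phi y) u.
Proof.
  intros Hphi Hw HB Hu.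
  destruct (Hphi (cyl u []) (@is_open_cyl _ u [])) as [U [HU HUV]].
  assert (Uw : U (Fin w)).
  { apply (HUV _ Hw); rewrite Hu; split; [exact HB|]; split.
    - intros i c Hc; exact Hc.
    - intros c _ []. }
  destruct (HU _ Uw) as [x [F [Hx HxU]]]; exists x, F; split; [exact Hx|].
  intros y Hy Hxy; exact (proj1 (proj2 (proj1 (HUV _ Hy) (HxU _ Hxy)))).
Qed.

(* The periodic points of [w a] accumulate at [w] as [a] runs through an infinite set. *)
Lemma continuous_on_periodic_prefix (A B : Type) (Lam : pt A -> Prop) (phi : pt A -> pt B)
    (P : A -> Prop) (w : list A) (u : list B) :
  continuous_on Lam phi -> Lam (Fin w) -> infinite_type B -> phi (Fin w) = Fin u ->
  infinitely_many P -> (forall a, P a -> Lam (Inf (periodic (w ++ [a]) a))) ->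
  exists a, P a /\ has_prefix (phi (Inf (periodic (w ++ [a]) a))) u.
Proof.
  intros Hphi Hw HB Hu HP HLam.
  destruct (continuous_on_Fin_prefix w Hphi Hw HB Hu) as [x [F [Hx Hnear]]].
  destruct (infinitely_many_avoid F HP) as [a [Ha HaF]].
  exists a; split; [exact Ha|]; apply Hnear; [apply HLam, Ha|].
  exact (cyl_Inf_of_Fin a Hx (periodic_has_prefix _ _) HaF).
Qed.

Lemma len_Some (A : Type) (p : pt A) (k : nat) :
  len p = Some k -> exists w, p = Fin w /\ length w = k.
Proof. destruct p as [w|x]; simpl; intros H; [injection H as <-; eauto|discriminate]. Qed.

Lemma len_None (A : Type) (p : pt A) : len p = None -> exists x, p = Inf x.
Proof. destruct p as [w|x]; simpl; intros H; [discriminate|eauto]. Qed.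

Theorem proposition1 (A : Type) (HA : infinite_type A) (M : nat) (HM : 1 <= M)
  (ft : list A -> bool)
  (H1 : exists xs : list A, length xs = M /\
          infinitely_many (fun a : A =>
            forall k, k <= M ->
              ft (firstn (M + 2) (skipn k ((xs ++ [a]) ++ (xs ++ [a])))) = true))
  (H2 : forall w : list A, length w = M + 1 ->
          finitely_many (fun b : A => ft (w ++ [b]) = true)) :
  forall (B : Type) (Y : pt B -> Prop),
    is_Nstep_shift M Y -> ~ conjugate (Xf (f_ind (M + 1) ft)) Y.
Proof.
  intros B Y [g HY] [phi [Hmap [_ [Hsurj [Hcont [Hshift Hlen]]]]]].
  destruct H1 as [xs [Hxs Hgood]].
  set (per := fun a => periodic (xs ++ [a]) a).
  assert (Hlxs : forall a, length (xs ++ [a]) = S M)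
    by (intros a; rewrite length_app, Hxs, Nat.add_1_r; reflexivity).
  assert (Hper : forall a, (forall k, k <= M ->
            ft (firstn (M + 2) (skipn k ((xs ++ [a]) ++ (xs ++ [a])))) = true) ->
            Xinf (f_ind (M + 1) ft) (per a)).
  { intros a Ga; apply periodic_Xinf; rewrite Hlxs; [lia | lia |].
    intros k Hk; replace (S (M + 1)) with (M + 2) by lia; apply Ga; lia. }
  assert (Xxs : Xfin (f_ind (M + 1) ft) xs)
    by (apply Xfin_of_periodic; revert Hgood; apply infinitely_many_mono; exact Hper).
  destruct (@len_Some _ (phi (Fin xs)) M) as [u [Eu Hu]]; [rewrite Hlen, <- Hxs; auto|].
  assert (Yu : Xfin (f_ind M g) u) by (apply (HY (Fin u)); rewrite <- Eu; apply Hmap, Xxs).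
  destruct (continuous_on_periodic_prefix xs Hcont Xxs (infinitely_many_infinite_type Yu) Eu
              Hgood Hper) as [a [Ga Hpre]].
  set (q := fun n => per a (M + n)).
  assert (Xq : Xinf (f_ind (M + 1) ft) q) by (apply Xinf_shift_by, Hper, Ga).
  destruct (len_None (phi (Inf q))) as [z Ez]; [rewrite Hlen by exact Xq; reflexivity|].
  assert (Yz : Y (Fin (z 0 :: u))).
  { apply HY, (Xfin_f_ind_cons Yu Hu).
    - apply (HY (Inf z)); rewrite <- Ez; apply Hmap, Xq.
    - rewrite <- Ez, <- Hshift by exact Xq; unfold q, per.
      rewrite shift_periodic_last by apply Hlxs; exact Hpre. }
  destruct (Hsurj _ Yz) as [v [Xv Ev]].
  destruct (@len_Some _ v (M + 1)) as [w [-> Hw]].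
  { rewrite <- (Hlen _ Xv), Ev; simpl; rewrite Hu, Nat.add_1_r; reflexivity. }
  exact (Xfin_f_ind_next Xv Hw (H2 w Hw)).
Qed.
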